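(* Let $\mathcal H$ be a Hilbert space and $\mathcal S,\mathcal W,\mathcal A\subseteq\mathcal H$ closed subspaces such that $\mathcal S,\mathcal W,\mathcal A,\mathcal S^\perp,\mathcal W^\perp,\mathcal A^\perp$ are nonzero and $\mathcal A\oplus\mathcal S^\perp=\mathcal H$. Let $0\le\lambda\le\cos(\mathcal A,\mathcal S)$, $T_\lambda:=\lambda P_{\mathcal W}P_{\mathcal A\mathcal S^\perp}+(1-\lambda)P_{\mathcal W}P_{\mathcal S}$, $R_\lambda:=P_{\mathcal W}-T_\lambda$ and $E_\lambda:=I-T_\lambda$. Then for all $x\in\mathcal H$, $$\|R_\lambda x\|\le\sqrt2\,\|x\|\qquad\text{and}\qquad\|E_\lambda x\|\le\sqrt3\,\|x\|.$$
   Context: $P_{\mathcal V}$ is the orthogonal projection onto a closed subspace $\mathcal V$, $\mathcal V^\perp$ its orthogonal complement, $I$ the identity. For closed subspaces with $\mathcal V_1\oplus\mathcal V_2=\mathcal H$, $P_{\mathcal V_1\mathcal V_2}$ is the oblique projection onto $\mathcal V_1$ along $\mathcal V_2$ (identity on $\mathcal V_1$, zero on $\mathcal V_2$). $\cos(\mathcal V_1,\mathcal V_2):=\inf_{0\ne x\in\mathcal V_1}\|P_{\mathcal V_2}x\|/\|x\|$. *)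

From Stdlib Require Import Reals.
Open Scope R_scope.

Record HilbertSpace := {
  hs_car :> Type;
  hs_zero : hs_car;
  hs_add : hs_car -> hs_car -> hs_car;
  hs_opp : hs_car -> hs_car;
  hs_scal : R -> hs_car -> hs_car;
  hs_inner : hs_car -> hs_car -> R;
  hs_addA : forall x y z, hs_add x (hs_add y z) = hs_add (hs_add x y) z;
  hs_addC : forall x y, hs_add x y = hs_add y x;
  hs_add0 : forall x, hs_add x hs_zero = x;
  hs_addN : forall x, hs_add x (hs_opp x) = hs_zero;
  hs_scalA : forall a b x, hs_scal a (hs_scal b x) = hs_scal (a * b) x;
  hs_scal1 : forall x, hs_scal 1 x = x;
  hs_scalDr : forall a x y, hs_scal a (hs_add x y) = hs_add (hs_scal a x) (hs_scal a y);
  hs_scalDl : forall a b x, hs_scal (a + b) x = hs_add (hs_scal a x) (hs_scal b x);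
  hs_innerC : forall x y, hs_inner x y = hs_inner y x;
  hs_innerDl : forall x y z, hs_inner (hs_add x y) z = hs_inner x z + hs_inner y z;
  hs_innerZl : forall a x y, hs_inner (hs_scal a x) y = a * hs_inner x y;
  hs_inner_ge0 : forall x, 0 <= hs_inner x x;
  hs_inner_eq0 : forall x, hs_inner x x = 0 -> x = hs_zero;
  hs_complete : forall u : nat -> hs_car,
    (forall eps, eps > 0 -> exists N, forall n m, (n >= N)%nat -> (m >= N)%nat ->
        sqrt (hs_inner (hs_add (u n) (hs_opp (u m))) (hs_add (u n) (hs_opp (u m)))) < eps) ->
    exists l, forall eps, eps > 0 -> exists N, forall n, (n >= N)%nat ->
        sqrt (hs_inner (hs_add (u n) (hs_opp l)) (hs_add (u n) (hs_opp l))) < eps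
}.

Arguments hs_zero {h}.
Arguments hs_add {h}.
Arguments hs_opp {h}.
Arguments hs_scal {h}.
Arguments hs_inner {h}.

Section Ops.
Variable H : HilbertSpace.

Definition vsub (x y : H) : H := hs_add x (hs_opp y).
Definition hnorm (x : H) : R := sqrt (hs_inner x x).

Definition closed_subspace (S : H -> Prop) : Prop :=
  S hs_zero /\
  (forall x y, S x -> S y -> S (hs_add x y)) /\
  (forall a x, S x -> S (hs_scal a x)) /\
  (forall (u : nat -> H) (l : H), (forall n, S (u n)) ->
     (forall eps, eps > 0 -> exists N, forall n, (n >= N)%nat -> hnorm (vsub (u n) l) < eps) ->
     S l).

Definition orth (S : H -> Prop) : H -> Prop :=
  fun x => forall y, S y -> hs_inner x y = 0.

Definition nonzero_sub (S : H -> Prop) : Prop := exists x, S x /\ x <> hs_zero.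

Definition is_orth_proj (V : H -> Prop) (P : H -> H) : Prop :=
  forall x, V (P x) /\ orth V (vsub x (P x)).

Definition direct_sum_full (V1 V2 : H -> Prop) : Prop :=
  (forall x, exists a b, V1 a /\ V2 b /\ x = hs_add a b) /\
  (forall x, V1 x -> V2 x -> x = hs_zero).

Definition is_oblique_proj (V1 V2 : H -> Prop) (Q : H -> H) : Prop :=
  forall x, V1 (Q x) /\ V2 (vsub x (Q x)).

(* c = cos(V1, V2) = inf_{0 <> x in V1} ||P_{V2} x|| / ||x||, where PV2 is the
   orthogonal projection onto V2. *)
Definition is_cos (V1 : H -> Prop) (PV2 : H -> H) (c : R) : Prop :=
  let E := fun r => exists x, V1 x /\ x <> hs_zero /\ r = hnorm (PV2 x) / hnorm x in
  (forall r, E r -> c <= r) /\ (forall b, (forall r, E r -> b <= r) -> b <= c).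

End Ops.

Arguments vsub {H}.
Arguments hnorm {H}.
Arguments closed_subspace {H}.
Arguments orth {H}.
Arguments nonzero_sub {H}.
Arguments is_orth_proj {H}.
Arguments direct_sum_full {H}.
Arguments is_oblique_proj {H}.
Arguments is_cos {H}.

(* Write p = P_S x and q = Q x with Q = P_{A S^perp}.  Then
   T x = P_W (lam q + (1 - lam) p), hence R x = P_W x - T x lies in W and
   y - R x is orthogonal to W for y = x - lam q - (1 - lam) p, so
   ||R x|| <= ||y||.  Since x - q lies in S^perp, P_S q = p, and the cosine
   bound gives lam ||q|| <= ||P_S q|| = ||p||.  Writing
   y = (x - p) - lam (q - p), the parallelogram inequality together with
   ||x||^2 = ||p||^2 + ||x - p||^2 and ||q||^2 = ||p||^2 + ||q - p||^2 yields
   ||y||^2 <= 2 ||x||^2.  Finally E x = (x - P_W x) + R x is an orthogonal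
   sum, so ||E x||^2 <= ||x||^2 + 2 ||x||^2. *)

From Stdlib Require Import Reals Lra.
Open Scope R_scope.

Section InnerProduct.
Variable H : HilbertSpace.
Implicit Types x y z : H.

Lemma ip_addr x y z : hs_inner x (hs_add y z) = hs_inner x y + hs_inner x z.
Proof. rewrite !(hs_innerC H x). apply hs_innerDl. Qed.

Lemma ip_scalr (c : R) x y : hs_inner x (hs_scal c y) = c * hs_inner x y.
Proof. rewrite !(hs_innerC H x). apply hs_innerZl. Qed.

Lemma ip_zerol y : hs_inner hs_zero y = 0.
Proof.
  assert (E : hs_inner (hs_add (@hs_zero H) hs_zero) y = hs_inner hs_zero y)
    by now rewrite hs_add0.
  rewrite hs_innerDl in E. lra.
Qed.

Lemma ip_zeror y : hs_inner y hs_zero = 0.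
Proof. rewrite hs_innerC. apply ip_zerol. Qed.

Lemma ip_oppl x y : hs_inner (hs_opp x) y = - hs_inner x y.
Proof.
  assert (E := hs_innerDl H x (hs_opp x) y). rewrite hs_addN, ip_zerol in E. lra.
Qed.

Lemma ip_oppr x y : hs_inner y (hs_opp x) = - hs_inner y x.
Proof. rewrite hs_innerC, ip_oppl, hs_innerC. reflexivity. Qed.

End InnerProduct.

Hint Rewrite hs_innerDl ip_addr hs_innerZl ip_scalr ip_oppl ip_oppr
  ip_zerol ip_zeror : inner.

Ltac expand_inner := unfold vsub in *; autorewrite with inner in *.

Section Geometry.
Variable H : HilbertSpace.
Implicit Types x y a b r : H.

Lemma eq_of_dist0 a b : hs_inner (vsub a b) (vsub a b) = 0 -> a = b.
Proof.
  intros D. apply hs_inner_eq0 in D. unfold vsub in D.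
  transitivity (hs_add a (hs_add b (hs_opp b))).
  - rewrite hs_addN, hs_add0. reflexivity.
  - rewrite (hs_addC H b), hs_addA, D, hs_addC, hs_add0. reflexivity.
Qed.

Lemma opp_scal x : hs_opp x = hs_scal (-1) x.
Proof. apply eq_of_dist0. expand_inner. ring. Qed.

Lemma subspace_sub (V : H -> Prop) a b :
  closed_subspace V -> V a -> V b -> V (vsub a b).
Proof.
  intros (_ & hadd & hscal & _) Va Vb. unfold vsub.
  rewrite opp_scal. apply hadd; auto.
Qed.

Lemma pythagoras y r :
  hs_inner (vsub y r) r = 0 ->
  hs_inner y y = hs_inner r r + hs_inner (vsub y r) (vsub y r).
Proof. intros E. expand_inner. rewrite (hs_innerC H r y) in *. lra. Qed.

Lemma pythagoras_le y r :
  hs_inner (vsub y r) r = 0 -> hs_inner r r <= hs_inner y y.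
Proof.
  intros E. rewrite (pythagoras y r E).
  assert (G := hs_inner_ge0 H (vsub y r)). lra.
Qed.

Lemma residual_le (V : H -> Prop) y r :
  V r -> orth V (vsub y r) -> hs_inner r r <= hs_inner y y.
Proof. intros Vr O. apply pythagoras_le, O, Vr. Qed.

Lemma sub_sqnorm_le a b :
  hs_inner (vsub a b) (vsub a b) <= 2 * hs_inner a a + 2 * hs_inner b b.
Proof.
  assert (G := hs_inner_ge0 H (hs_add a b)).
  expand_inner. rewrite (hs_innerC H b a) in *. lra.
Qed.

Lemma orth_proj_congr (S : H -> Prop) (P : H -> H) x y :
  closed_subspace S -> is_orth_proj S P -> orth S (vsub x y) -> P x = P y.
Proof.
  intros hS hP Oxy. apply eq_of_dist0.
  destruct (hP x) as [Sx Ox]. destruct (hP y) as [Sy Oy].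
  set (d := vsub (P x) (P y)).
  assert (Sd : S d) by now apply subspace_sub.
  assert (e1 := Ox d Sd). assert (e2 := Oy d Sd). assert (e3 := Oxy d Sd).
  unfold d in *. expand_inner. lra.
Qed.

Lemma cos_lower_bound (A : H -> Prop) (P : H -> H) (c lam : R) q :
  is_cos A P c -> 0 <= lam -> lam <= c -> A q ->
  lam * lam * hs_inner q q <= hs_inner (P q) (P q).
Proof.
  intros [cos_lb _] l0 lc Aq.
  destruct (Req_dec (hs_inner q q) 0) as [z | nz].
  { rewrite z. assert (G := hs_inner_ge0 H (P q)). lra. }
  assert (qnz : q <> hs_zero) by (intros ->; apply nz, ip_zerol).
  assert (qpos : 0 < hnorm q).
  { unfold hnorm. apply sqrt_lt_R0.
    destruct (hs_inner_ge0 H q); [assumption | congruence]. }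
  assert (Hc := cos_lb _ (ex_intro _ q (conj Aq (conj qnz eq_refl)))).
  assert (L : lam * hnorm q <= hnorm (P q)).
  { apply Rmult_le_reg_r with (/ hnorm q); [now apply Rinv_0_lt_compat |].
    rewrite Rmult_assoc, Rinv_r, Rmult_1_r by lra. unfold Rdiv in Hc. lra. }
  assert (L2 : (lam * hnorm q) * (lam * hnorm q) <= hnorm (P q) * hnorm (P q)).
  { apply Rmult_le_compat; nra. }
  unfold hnorm in L2.
  rewrite <- !(Rmult_comm (sqrt _)), !Rmult_assoc, (Rmult_comm lam),
    <- !Rmult_assoc, !sqrt_sqrt in L2 by apply hs_inner_ge0.
  nra.
Qed.

Lemma norm_bound_of_sq x y (k : R) :
  0 <= k -> hs_inner y y <= k * hs_inner x x -> hnorm y <= sqrt k * hnorm x.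
Proof.
  intros k0 E. unfold hnorm.
  rewrite <- sqrt_mult by (try apply hs_inner_ge0; lra).
  now apply sqrt_le_1_alt.
Qed.

End Geometry.

Section RelaxedProjection.
Variable H : HilbertSpace.
Variables (S W A : H -> Prop) (PS PW QAS : H -> H) (c lam : R).
Hypothesis hS : closed_subspace S.
Hypothesis hW : closed_subspace W.
Hypothesis PS_proj : is_orth_proj S PS.
Hypothesis PW_proj : is_orth_proj W PW.
Hypothesis QAS_proj : is_oblique_proj A (orth S) QAS.
Hypothesis cos_AS : is_cos A PS c.
Hypothesis lam_ge0 : 0 <= lam.
Hypothesis lam_le_cos : lam <= c.

Definition Tl (x : H) : H :=
  hs_add (hs_scal lam (PW (QAS x))) (hs_scal (1 - lam) (PW (PS x))).
Definition Rl (x : H) : H := vsub (PW x) (Tl x).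
Definition El (x : H) : H := vsub x (Tl x).

(* The vector whose projection onto W is R x. *)
Definition preR (x : H) : H :=
  vsub (vsub x (hs_scal lam (QAS x))) (hs_scal (1 - lam) (PS x)).

Lemma PS_oblique x : PS (QAS x) = PS x.
Proof.
  apply orth_proj_congr with S; auto.
  intros s Ss. destruct (QAS_proj x) as [_ O]. assert (e := O s Ss).
  expand_inner. lra.
Qed.

Lemma preR_sqnorm_le x : hs_inner (preR x) (preR x) <= 2 * hs_inner x x.
Proof.
  set (p := PS x). set (q := QAS x).
  destruct (PS_proj x) as [Sp Op]. destruct (QAS_proj x) as [Aq _].
  fold p in Sp, Op. fold q in Aq.
  assert (Pq : PS q = p) by apply PS_oblique.
  assert (Oq : orth S (vsub q p)).
  { rewrite <- Pq. apply (proj2 (PS_proj q)). }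
  assert (Hx := pythagoras H x p (Op p Sp)).
  assert (Hq := pythagoras H q p (Oq p Sp)).
  assert (Hcos := cos_lower_bound H A PS c lam q cos_AS lam_ge0 lam_le_cos Aq).
  rewrite Pq in Hcos.
  assert (Hpar := sub_sqnorm_le H (vsub x p) (hs_scal lam (vsub q p))).
  assert (G1 := hs_inner_ge0 H p). assert (G2 := hs_inner_ge0 H (vsub q p)).
  unfold preR. fold p q. expand_inner.
  rewrite (hs_innerC H p x), (hs_innerC H q x), (hs_innerC H p q) in *.
  nra.
Qed.

Lemma Rl_in_W x : W (Rl x).
Proof.
  destruct hW as (_ & hadd & hscal & _). unfold Rl, Tl.
  apply subspace_sub; auto; [apply PW_proj |].
  apply hadd; apply hscal, PW_proj.
Qed.

Lemma preR_sub_Rl_orth x : orth W (vsub (preR x) (Rl x)).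
Proof.
  intros w Ww.
  assert (f1 := proj2 (PW_proj x) w Ww).
  assert (f2 := proj2 (PW_proj (QAS x)) w Ww).
  assert (f3 := proj2 (PW_proj (PS x)) w Ww).
  unfold preR, Rl, Tl. expand_inner.
  assert (g1 : hs_inner x w = hs_inner (PW x) w) by lra.
  assert (g2 : hs_inner (QAS x) w = hs_inner (PW (QAS x)) w) by lra.
  assert (g3 : hs_inner (PS x) w = hs_inner (PW (PS x)) w) by lra.
  rewrite g1, g2, g3. ring.
Qed.

Lemma Rl_sqnorm_le x : hs_inner (Rl x) (Rl x) <= 2 * hs_inner x x.
Proof.
  eapply Rle_trans; [| apply preR_sqnorm_le].
  apply residual_le with W; [apply Rl_in_W | apply preR_sub_Rl_orth].
Qed.

(* E x = (x - P_W x) + R x with orthogonal summands. *)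
Lemma El_sqnorm_le x : hs_inner (El x) (El x) <= 3 * hs_inner x x.
Proof.
  assert (t1 := proj2 (PW_proj x) (Rl x) (Rl_in_W x)).
  assert (t2 := proj2 (PW_proj x) _ (proj1 (PW_proj x))).
  assert (t3 := Rl_sqnorm_le x).
  unfold El. unfold Rl in t1, t3. set (t := Tl x) in *. set (u := PW x) in *.
  expand_inner. rewrite (hs_innerC H t x), (hs_innerC H t u) in *.
  assert (G := hs_inner_ge0 H u). lra.
Qed.

End RelaxedProjection.

Theorem mainTheorem9 (H : HilbertSpace) (S W A : H -> Prop)
  (PS PW QAS : H -> H) (c lam : R) :
  closed_subspace S -> closed_subspace W -> closed_subspace A ->
  nonzero_sub S -> nonzero_sub W -> nonzero_sub A ->
  nonzero_sub (orth S) -> nonzero_sub (orth W) -> nonzero_sub (orth A) ->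
  direct_sum_full A (orth S) ->
  is_orth_proj S PS -> is_orth_proj W PW ->
  is_oblique_proj A (orth S) QAS ->
  is_cos A PS c ->
  0 <= lam -> lam <= c ->
  let T := fun x : H => hs_add (hs_scal lam (PW (QAS x))) (hs_scal (1 - lam) (PW (PS x))) in
  let Rl := fun x : H => vsub (PW x) (T x) in
  let El := fun x : H => vsub x (T x) in
  forall x : H, hnorm (Rl x) <= sqrt 2 * hnorm x /\ hnorm (El x) <= sqrt 3 * hnorm x.
Proof.
  intros hS hW _ _ _ _ _ _ _ _ PSp PWp Qp hcos l0 lc T R E x.
  split; apply norm_bound_of_sq; try lra.
  - exact (Rl_sqnorm_le H S W A PS PW QAS c lam hS hW PSp PWp Qp hcos l0 lc x).
  - exact (El_sqnorm_le H S W A PS PW QAS c lam hS hW PSp PWp Qp hcos l0 lc x).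
Qed.
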